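(* Let $K$ be a field of characteristic $\neq 2$, $A\in K[t]$ non-zero, and let $(x,y,z)$ be a fundamental Markoff triple for $A$. (1) If $x\neq 0$, then $A$ and $x$ are constants (elements of $K$). (2) If $x=0$, then $K$ contains a square root $i$ of $-1$, and there exist $f\in K[t]\setminus K$ and $\varepsilon\in\{\pm1\}$ with $y=\varepsilon i f$ and $z=f$.
   Context: For non-zero $A\in K[t]$, solutions are triples $(x,y,z)\in K[t]^3$ with $x^2+y^2+z^2=Axyz$. The degree of the zero polynomial is $-\infty$. The height is $\max\{\deg x,\deg y,\deg z\}$. A Markoff triple is a solution with positive height and $\deg x\le\deg y\le\deg z$; it is fundamental if moreover $\deg y=\deg z$. *)

From HB Require Import structures.
From mathcomp Require Import all_boot all_order all_algebra.
Set Implicit Arguments. Unset Strict Implicit. Unset Printing Implicit Defensive.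
Import Order.TTheory GRing.Theory Num.Theory.
Local Open Scope ring_scope.

(* Degrees with the convention deg 0 = -oo are encoded via [size]:
   size p = deg p + 1 for p <> 0 and size 0 = 0, so
   deg p <= deg q  <->  size p <= size q, and deg p > 0 <-> size p > 1. *)

Definition markoff_sol (K : fieldType) (A x y z : {poly K}) : Prop :=
  x ^+ 2 + y ^+ 2 + z ^+ 2 = A * x * y * z.

Definition height_pos (K : fieldType) (x y z : {poly K}) : Prop :=
  (1 < maxn (size x) (maxn (size y) (size z)))%N.

Definition markoff_triple (K : fieldType) (A x y z : {poly K}) : Prop :=
  [/\ markoff_sol A x y z, height_pos x y z,
      (size x <= size y)%N & (size y <= size z)%N].

Definition fundamental_markoff (K : fieldType) (A x y z : {poly K}) : Prop :=
  markoff_triple A x y z /\ size y = size z.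

From HB Require Import structures.
From mathcomp Require Import all_boot all_order all_algebra.
From mathcomp Require Import zify ring.
Import Order.TTheory GRing.Theory Num.Theory.
Local Open Scope ring_scope.

(* Since deg x <= deg y = deg z, the left-hand side x^2 + y^2 + z^2 has degree
   at most 2 deg z, whereas the right-hand side A x y z has degree
   deg A + deg x + 2 deg z when x <> 0; hence deg A = deg x = 0.  When x = 0
   the equation reads y^2 = -z^2: comparing leading coefficients produces
   i in K with i^2 = -1, and (y - i z)(y + i z) = 0 in the domain K[t] gives
   y = +-i z. *)

Lemma size_add3_sqr_le {R : nzSemiRingType} {x y z : {poly R}} :
  (size x <= size z)%N -> (size y <= size z)%N ->
  (size (x ^+ 2 + y ^+ 2 + z ^+ 2)%R <= ((size z).-1 * 2).+1)%N.
Proof.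
move=> le_xz le_yz.
have le_sqr (p : {poly R}) : (size p <= size z)%N ->
    (size (p ^+ 2) <= ((size z).-1 * 2).+1)%N.
  by move=> le_pz; apply: leq_trans (size_poly_exp_leq p 2) _; lia.
apply: leq_trans (size_polyD _ _) _; rewrite geq_max le_sqr // andbT.
by apply: leq_trans (size_polyD _ _) _; rewrite geq_max !le_sqr.
Qed.

Lemma size_mul4 {R : idomainType} {a b c d : {poly R}} :
  a != 0 -> b != 0 -> c != 0 -> d != 0 ->
  (size (a * b * c * d)%R).-1 =
    ((size a).-1 + (size b).-1 + (size c).-1 + (size d).-1)%N.
Proof.
move=> a0 b0 c0 d0.
have ab0 : a * b != 0 by rewrite mulf_neq0.
have abc0 : a * b * c != 0 by rewrite mulf_neq0.
rewrite !size_mul //.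
move: a0 b0 c0 d0; rewrite -!size_poly_gt0; lia.
Qed.

Lemma markoff_sol_size_le1 {K : fieldType} {A x y z : {poly K}} :
  markoff_sol A x y z -> A != 0 -> x != 0 ->
  (size x <= size z)%N -> size y = size z ->
  (size A <= 1)%N /\ (size x <= 1)%N.
Proof.
move=> hE A0 x0 le_xz eq_yz.
have z0 : z != 0 by move: x0 le_xz; rewrite -!size_poly_gt0; lia.
have y0 : y != 0 by rewrite -size_poly_gt0 eq_yz size_poly_gt0.
have lhs_le := size_add3_sqr_le le_xz (eq_leq eq_yz).
have rhs_deg := size_mul4 A0 x0 y0 z0.
rewrite hE in lhs_le; rewrite eq_yz in rhs_deg.
move: lhs_le rhs_deg A0 x0; rewrite -!size_poly_gt0.
(* the sizes occur under different structure instances, which lia would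
   treat as distinct atoms *)
move: (size (A * x * y * z)%R) (size A) (size x) (size z) => s a b c; lia.
Qed.

Lemma lead_coef_ratio_sqr {K : fieldType} {y z : {poly K}} :
  z != 0 -> y ^+ 2 + z ^+ 2 = 0 -> (lead_coef y / lead_coef z) ^+ 2 = -1.
Proof.
move=> z0 e.
have lz0 : lead_coef z != 0 by rewrite lead_coef_eq0.
have : lead_coef (y ^+ 2) = lead_coef (- z ^+ 2).
  by rewrite -(addrK (z ^+ 2) (y ^+ 2)) e sub0r.
rewrite lead_coefN !lead_coef_exp expr_div_n => ->.
by rewrite mulNr divff // expf_neq0.
Qed.

Lemma sqr_add_sqr_eq0 {K : fieldType} {y z : {poly K}} :
  z != 0 -> y ^+ 2 + z ^+ 2 = 0 -> exists2 i : K, i ^+ 2 = -1 & y = i%:P * z.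
Proof.
move=> z0 e; set i := lead_coef y / lead_coef z.
have hi : i ^+ 2 = -1 := lead_coef_ratio_sqr z0 e.
have : (y - i%:P * z) * (y + i%:P * z) = 0.
  rewrite -e; have -> : (y - i%:P * z) * (y + i%:P * z)
                         = y ^+ 2 - (i%:P) ^+ 2 * z ^+ 2 by ring.
  by rewrite -rmorphXn /= hi polyCN mulN1r opprK.
move/eqP; rewrite mulf_eq0 => /orP[|].
- by rewrite subr_eq0 => /eqP ->; exists i.
- rewrite addr_eq0 => /eqP ->; exists (- i); first by rewrite sqrrN.
  by rewrite polyCN mulNr.
Qed.

Theorem lemma2p2 (K : fieldType) (A x y z : {poly K})
  (hchar : (2%:R : K) != 0) (hA : A != 0)
  (hF : fundamental_markoff A x y z) :
  (x != 0 -> (size A <= 1)%N /\ (size x <= 1)%N) /\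
  (x = 0 -> exists i : K, i ^+ 2 = -1 /\
     exists (f : {poly K}) (eps : K),
       (1 < size f)%N /\ (eps = 1 \/ eps = -1) /\
       y = (eps * i)%:P * f /\ z = f).
Proof.
case: hF => [[hE hH le_xy le_yz] eq_yz].
split=> [x0 | x0].
  exact: markoff_sol_size_le1 hE hA x0 (leq_trans le_xy le_yz) eq_yz.
have z_gt1 : (1 < size z)%N by move: hH; rewrite /height_pos; lia.
have z0 : z != 0 by rewrite -size_poly_gt0; lia.
have e : y ^+ 2 + z ^+ 2 = 0.
  by move: hE; rewrite /markoff_sol x0 mulr0 !mul0r expr0n /= add0r.
(* replacing i by -i if necessary, eps = 1 always works *)
have [i hi ->] := sqr_add_sqr_eq0 z0 e.
exists i; split=> //; exists z, 1.
by rewrite mul1r; split=> //; split; [left|].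
Qed.
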